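(* Let $G\leq\mathrm{Sym}(n)$ be a Frobenius group with Frobenius complement $H$ and Frobenius kernel $K$, so $G=KH$. Then $G$ has the EKR property. Furthermore, $G$ has the strict EKR property if and only if $|H|=2$.
   Context: A transitive permutation group $G\leq\mathrm{Sym}(n)$ is a Frobenius group if no non-identity element fixes more than one point and some non-identity element fixes a point. A Frobenius complement is a non-trivial proper subgroup $H$ with $H\cap g^{-1}Hg=\{\mathrm{id}\}$ for all $g\in G\setminus H$; the Frobenius kernel is $K=\left(G\setminus\bigcup_{g\in G}g^{-1}Hg\right)\cup\{\mathrm{id}\}$. Two permutations $\pi,\tau\in G$ intersect if $\pi\tau^{-1}$ has a fixed point. A subset is intersecting if every pair of its elements intersect. $G$ has the EKR property if every intersecting subset has size at most the size of the largest point-stabilizer; $G$ has the strict EKR property if moreover the only intersecting subsets of maximum size are the cosets of the point-stabilizers. *)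

From mathcomp Require Import all_boot all_fingroup.
Set Implicit Arguments. Unset Strict Implicit. Unset Printing Implicit Defensive.
Local Open Scope group_scope.

(* Permutations of the n points 'I_n; Sym(n) = [set: {perm 'I_n}].
   Note: in MathComp, (s * t) x = t (s x) and  H :^ g = g^-1 H g. *)

Definition frobenius_perm_group n (G : {group {perm 'I_n}}) : Prop :=
  [/\ [transitive G, on [set: 'I_n] | 'P],
      (forall g, g \in G -> g != 1%g -> #|[set x | g x == x]| <= 1)%N
    & exists2 g, g \in G & (g != 1%g) && [exists x, g x == x]].

Definition frobenius_complement n (G H : {group {perm 'I_n}}) : Prop :=
  [/\ H \proper G, H :!=: 1%g
    & forall g, g \in G :\: H -> H :&: (H :^ g) = 1%g].

Definition frobenius_kernel n (G H : {group {perm 'I_n}}) : {set {perm 'I_n}} :=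
  (G :\: \bigcup_(g in G) (H :^ g)) :|: [set 1%g].

(* pi and tau intersect iff pi tau^-1 has a fixed point. *)
Definition perm_intersect n (pi tau : {perm 'I_n}) : bool :=
  [exists x, (pi * tau^-1) x == x].

Definition intersecting n (S : {set {perm 'I_n}}) : Prop :=
  forall pi tau, pi \in S -> tau \in S -> perm_intersect pi tau.

Definition point_stab n (G : {group {perm 'I_n}}) (x : 'I_n) : {set {perm 'I_n}} :=
  'C_G[x | 'P].

Definition max_stab_size n (G : {group {perm 'I_n}}) : nat :=
  \max_(x : 'I_n) #|point_stab G x|.

Definition EKR n (G : {group {perm 'I_n}}) : Prop :=
  forall S : {set {perm 'I_n}}, S \subset G -> intersecting S ->
    (#|S| <= max_stab_size G)%N.

(* Cosets of point stabilizers; right cosets G_x g coincide with left cosets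
   g' G_y (both are the sets {s in G | s y = z}). *)
Definition strict_EKR n (G : {group {perm 'I_n}}) : Prop :=
  EKR G /\
  forall S : {set {perm 'I_n}}, S \subset G -> intersecting S ->
    #|S| = max_stab_size G ->
    exists x : 'I_n, exists2 g, g \in G & S = point_stab G x :* g.

From mathcomp Require Import all_boot all_fingroup all_solvable.
From mathcomp Require Import vcharacter.
Set Implicit Arguments. Unset Strict Implicit. Unset Printing Implicit Defensive.
Local Open Scope group_scope.

(* A point stabilizer G_x of a Frobenius permutation group G is a Frobenius
   complement, so by Frobenius' theorem G = K ><| G_x, where the kernel K
   consists of the identity and the derangements of G.  Hence distinct
   permutations intersect exactly when they lie in distinct right cosets of K:
   intersecting sets are partial transversals of K, of size at most
   |G : K| = |G_x|.  If |G_x| > 2, moving one non-identity element of G_x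
   inside its K-coset gives a transversal that is not a coset of a point
   stabilizer, since it still meets G_x in two points; if |G_x| = 2, every
   intersecting pair is such a coset.  Finally |H| = 2 iff |G_x| = 2 for any
   two complements H, G_x: an involution of a complement inverts the kernel,
   so a complement has at most one involution, whereas every element outside
   the kernel is an involution when some complement has order 2. *)

Section FrobeniusKernel.

Variables (gT : finGroupType) (G K H : {group gT}).
Hypothesis frobG : [Frobenius G = K ><| H].

Lemma Frobenius_ker_commg h : h \in H^# -> [set [~ k, h] | k in K] = K.
Proof.
move=> Hh; have [defG _ _ _ _] := Frobenius_context frobG.
have [_ _ _ nKH _] := sdprod_context defG.
have nKh : h \in 'N(K) by apply: (subsetP nKH); case/setD1P: Hh.
have inj_commg : {in K &, injective (commg^~ h)}.
  move=> a b Ka Kb /= eq_ab.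
  have : b * a^-1 \in 'C_K[h].
    rewrite inE groupM ?groupV //=; apply/cent1P/commgP/conjg_fixP.
    rewrite conjMg conjVg.
    have -> : b ^ h = b * [~ a, h] by rewrite eq_ab commgEl mulKVg.
    by rewrite commgEl mulgA mulgK.
  rewrite (Frobenius_reg_ker frobG Hh) => /set1gP/(canRL (mulgKV a)).
  by rewrite mul1g.
apply/eqP; rewrite eqEcard card_in_imset // leqnn andbT.
by apply/subsetP=> _ /imsetP[k Kk ->]; rewrite commgEl groupM ?groupV ?memJ_norm.
Qed.

Lemma Frobenius_ker_sub_normal (N : {group gT}) :
  N <| G -> N :&: H != 1 -> K \subset N.
Proof.
case/andP=> _ nNG /trivgPn[h /setIP[Nh Hh] nth].
have [/sdprod_context[/andP[sKG _] _ _ _ _] _ _ _ _] := Frobenius_context frobG.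
rewrite -(Frobenius_ker_commg (h := h)) ?inE ?nth //.
apply/subsetP=> _ /imsetP[k Kk ->].
by rewrite commgEr groupM ?memJ_norm ?groupV // (subsetP nNG) ?(subsetP sKG).
Qed.

Lemma Frobenius_compl_invol_inv t :
  t \in H^# -> t ^+ 2 = 1 -> {in K, forall y, y ^ t = y^-1}.
Proof.
move=> Ht tt y; rewrite -(Frobenius_ker_commg Ht) => /imsetP[k _ ->].
have tt' : t * t = 1 by rewrite -tt.
by rewrite commgEl conjMg -conjgM tt' conjg1 conjVg [RHS]invMg invgK.
Qed.

Lemma Frobenius_compl_invol_uniq t s :
  t \in H^# -> t ^+ 2 = 1 -> s \in H^# -> s ^+ 2 = 1 -> t = s.
Proof.
move=> Ht tt Hs ss; have [_ ntK _ _ _] := Frobenius_context frobG.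
apply: contraNeq ntK => neq_ts.
have Hts : t * s \in H^#.
  have [/setD1P[_ Ht'] /setD1P[_ Hs']] := (Ht, Hs).
  rewrite !inE groupM // andbT; apply: contra neq_ts => /eqP ts1.
  by apply/eqP/(mulIg s); rewrite ts1 -ss.
rewrite -(Frobenius_reg_ker frobG Hts) eqEsubset subsetIl andbT.
apply/subsetP=> y Ky; rewrite inE Ky; apply/cent1P/commgP/conjg_fixP.
by rewrite conjgM (Frobenius_compl_invol_inv Ht tt Ky) conjVg
  (Frobenius_compl_invol_inv Hs ss Ky) invgK.
Qed.

Lemma Frobenius_compl2_invol : #|H| = 2 -> {in G :\: K, forall g, g ^+ 2 = 1}.
Proof.
move=> oH g /setDP[Gg notKg].
have /and3P[/eqP coverG _ _] := Frobenius_partition frobG.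
move: Gg; rewrite -coverG => /bigcupP[_ /setU1P[-> | /imsetP[k _ ->]] Hg].
  by rewrite Hg in notKg.
move: Hg; rewrite conjD1g => /setD1P[_]; rewrite mem_conjg => /expg_cardG.
by rewrite oH -conjXg => /eqP; rewrite conjg_eq1 => /eqP.
Qed.

End FrobeniusKernel.

Lemma Frobenius_compl_card2 gT (G K1 H1 K2 H2 : {group gT}) :
    [Frobenius G = K1 ><| H1] -> [Frobenius G = K2 ><| H2] ->
  #|H2| = 2 -> #|H1| = 2.
Proof.
move=> frobG1 frobG2 oH2.
have [defG1 _ ntH1 _ _] := Frobenius_context frobG1.
have [defG2 _ _ ltK2G _] := Frobenius_context frobG2.
have [_ sH1G _ _ _] := sdprod_context defG1.
have [nsK2G _ _ _ _] := sdprod_context defG2.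
have [tiH1K2 | ntH1K2] := eqVneq (H1 :&: K2) 1.
  apply/eqP; rewrite eqn_leq cardG_gt1 ntH1 andbT.
  rewrite -(leq_pmul2r (cardG_gt0 K2)) -TI_cardMg // -oH2 mulnC.
  by rewrite (sdprod_card defG2) subset_leq_card // mul_subG // normal_sub.
have sK1K2 : K1 \subset K2.
  by apply: (Frobenius_ker_sub_normal frobG1 nsK2G); rewrite setIC.
have [t H1t notK2t] : exists2 t, t \in H1 & t \notin K2.
  apply/subsetPn; apply: contra (proper_subn ltK2G) => sH1K2.
  by rewrite -(sdprodW defG1) mul_subG.
(* t and t * m are distinct involutions of H1. *)
have [m /setIP[H1m K2m] ntm] := trivgPn _ ntH1K2.
have notK2tm : t * m \notin K2.
  by apply: contra notK2t => K2tm; rewrite -(mulgK m t) groupM ?groupV.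
have invol x : x \in H1 -> x \notin K2 -> x \in H1^# /\ x ^+ 2 = 1.
  move=> H1x notK2x; split.
    by rewrite !inE H1x andbT; apply: contraNneq notK2x => ->.
  by apply: (Frobenius_compl2_invol frobG2 oH2); rewrite inE notK2x (subsetP sH1G).
have [H1t' tt] := invol t H1t notK2t.
have [H1tm tmtm] := invol (t * m) (groupM H1t H1m) notK2tm.
have /(canRL (mulKg t)) := Frobenius_compl_invol_uniq frobG1 H1tm tmtm H1t' tt.
by rewrite mulVg => /eqP; rewrite (negbTE ntm).
Qed.

Lemma frobenius_complement_Frobenius n (G H : {group {perm 'I_n}}) :
  frobenius_complement G H -> [Frobenius G with complement H].
Proof.
case=> ltHG ntH tiH; apply/andP; split; first exact: proper_neq.
apply/normedTI_memJ_P; split; first by rewrite setD_eq0 subG1.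
  exact: proper_sub.
move=> a g /setD1P[nta Ha] Gg; apply/idP/idP=> [/setD1P[_ Hag] | Hg]; last first.
  by rewrite !inE conjg_eq1 nta groupJ.
apply: contraTT nta => notHg.
have : a ^ g \in H :&: H :^ g by rewrite inE Hag memJ_conjg.
by rewrite tiH ?inE ?notHg // conjg_eq1 negbK.
Qed.

Lemma point_stabP n (G : {group {perm 'I_n}}) x g :
  reflect (g \in G /\ g x = x) (g \in point_stab G x).
Proof.
rewrite /point_stab inE.
by apply: (iffP andP) => [[Gg /astab1P gx] | [Gg gx]]; split=> //; apply/astab1P.
Qed.

Lemma Fix_permE n (g : {perm 'I_n}) :
  'Fix_([set: 'I_n] | 'P)[g] = [set x | g x == x].
Proof. by apply/setP=> x; rewrite !inE sub1set inE. Qed.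

Section FrobeniusPermGroup.

Variables (n : nat) (G : {group {perm 'I_n}}).
Hypothesis frobG : frobenius_perm_group G.

Lemma card_point_stab x y : #|point_stab G x| = #|point_stab G y|.
Proof.
have [transG _ _] := frobG.
have [a Ga ->] := atransP2 transG (in_setT x) (in_setT y).
by rewrite /point_stab astab1_act -{2}(conjGid Ga) -conjIg cardJg.
Qed.

Lemma max_stab_sizeE x : max_stab_size G = #|point_stab G x|.
Proof.
apply/anti_leq/andP; rewrite /max_stab_size; split; last exact: leq_bigmax.
by apply/bigmax_leqP=> y _; rewrite (card_point_stab y x).
Qed.

Lemma point_stab_fix_uniq g x y :
  g \in G -> g != 1 -> g x = x -> g y = y -> x = y.
Proof.
have [_ fix_le1 _] := frobG; move=> Gg ntg gx gy.
by apply: (card_le1_eqP (fix_le1 g Gg ntg)); rewrite inE; apply/eqP.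
Qed.

Lemma point_stab_Frobenius_action x :
  Frobenius_action G 'C_G[x | 'P] [set: 'I_n] 'P.
Proof.
have [transG fix_le1 [g0 Gg0 /andP[ntg0 /existsP[y g0y]]]] := frobG.
split=> //.
- apply/subsetP=> g /setIP[_ /astabP fixg]; apply/set1gP/permP=> z.
  by rewrite perm1 -[g z]apermE fixg.
- move=> g /setD1P[ntg Gg].
  by rewrite Fix_permE; apply: fix_le1.
- rewrite -cardG_gt1 -[#|_|]/#|point_stab G x| (card_point_stab x y) cardG_gt1.
  by apply/trivgPn; exists g0 => //; apply/point_stabP; split; last apply/eqP.
by exists x.
Qed.

Variables (x0 : 'I_n) (K : {group {perm 'I_n}}).
Hypothesis frobK : [Frobenius G = K ><| 'C_G[x0 | 'P]].

Lemma Frobenius_perm_kerE g : g \in G -> (g \in K^#) = [forall x, g x != x].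
Proof.
move=> Gg; have [defG _ _ _ _] := Frobenius_context frobK.
have [-> | ntg] := eqVneq g 1.
  by rewrite setD11; symmetry; apply/forallP=> /(_ x0); rewrite perm1 eqxx.
rewrite (Frobenius_action_kernel_def defG (point_stab_Frobenius_action x0)).
rewrite !inE ntg (negbTE ntg) Gg /= Fix_permE.
apply/eqP/forallP=> [fix0 x | nfix].
  by have := in_set0 x; rewrite -fix0 inE => ->.
by apply/setP=> x; rewrite inE in_set0; apply/negbTE/nfix.
Qed.

Lemma perm_intersectE :
  {in G &, forall p q, perm_intersect p q = (p * q^-1 \notin K^#)}.
Proof.
move=> p q Gp Gq; rewrite Frobenius_perm_kerE ?groupM ?groupV // negb_forall.
by apply: eq_existsb => x; rewrite negbK.
Qed.

Lemma intersecting_rcosetP (T : {set {perm 'I_n}}) : T \subset G ->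
  intersecting T <-> {in T &, injective (fun p => K :* p)}.
Proof.
move=> sTG; split=> [iT p q Tp Tq eqKpq | injT p q Tp Tq].
  have Kpq : p * q^-1 \in K by rewrite -mem_rcoset -eqKpq rcoset_refl.
  have := iT p q Tp Tq; rewrite perm_intersectE ?(subsetP sTG) //.
  by rewrite inE Kpq andbT negbK => /set1P/(canRL (mulgKV q)); rewrite mul1g.
rewrite perm_intersectE ?(subsetP sTG) //; apply/setD1P=> -[/eqP ntpq Kpq].
by apply: ntpq; rewrite (injT p q) ?mulgV //; apply/rcoset_eqP; rewrite mem_rcoset.
Qed.

Lemma index_Frobenius_perm_ker : #|G : K| = #|point_stab G x0|.
Proof.
have [defG _ _ _ _] := Frobenius_context frobK.
have [/andP[sKG _] _ _ _ _] := sdprod_context defG.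
by apply/eqP; rewrite -(eqn_pmul2l (cardG_gt0 K)) (Lagrange sKG) (sdprod_card defG).
Qed.

Lemma Frobenius_perm_EKR : EKR G.
Proof.
move=> T sTG /(intersecting_rcosetP sTG) injT.
rewrite (max_stab_sizeE x0) -index_Frobenius_perm_ker -(card_in_imset injT).
apply: subset_leq_card; apply/subsetP=> _ /imsetP[p Tp ->].
by rewrite -rcosetE; apply: imset_f; apply: (subsetP sTG).
Qed.

Lemma strict_EKR_card_point_stab2 : #|'C_G[x0 | 'P]| = 2 -> strict_EKR G.
Proof.
move=> oS; split=> [|T sTG iT]; first exact: Frobenius_perm_EKR.
rewrite (max_stab_sizeE x0) oS => /eqP/cards2P[a [b [neq_ab defT]]].
have [Ta Tb] : a \in T /\ b \in T by rewrite defT !inE !eqxx orbT.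
have [Ga Gb] := (subsetP sTG a Ta, subsetP sTG b Tb).
have /existsP[x /eqP bax] := iT b a Tb Ta.
exists x, a => //; apply/eqP.
rewrite eqEcard card_rcoset (card_point_stab x x0) oS defT cards2 neq_ab leqnn andbT.
apply/subsetP=> z; rewrite !inE => /orP[]/eqP->.
  by rewrite mem_rcoset mulgV; apply/point_stabP; rewrite perm1 group1.
by rewrite mem_rcoset; apply/point_stabP; rewrite groupM ?groupV.
Qed.

Lemma rcoset_transversal_intersecting (f : {perm 'I_n} -> {perm 'I_n}) :
    {in 'C_G[x0 | 'P], forall s, f s \in K :* s} ->
  [/\ f @: 'C_G[x0 | 'P] \subset G, intersecting (f @: 'C_G[x0 | 'P])
    & #|f @: 'C_G[x0 | 'P]| = #|'C_G[x0 | 'P]|].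
Proof.
move=> f_rcoset; have [defG _ _ _ _] := Frobenius_context frobK.
have [/andP[sKG _] sSG _ _ tiKS] := sdprod_context defG.
have rcoset_f : {in 'C_G[x0 | 'P], forall s, K :* f s = K :* s}.
  by move=> s Ss; apply/rcoset_eqP/f_rcoset.
have inj_rcosetS : {in 'C_G[x0 | 'P] &, injective (fun s => K :* s)}.
  move=> u v Su Sv /= /rcoset_eqP; rewrite mem_rcoset => Kuv.
  have : u * v^-1 \in K :&: 'C_G[x0 | 'P] by rewrite inE Kuv groupM ?groupV.
  by rewrite tiKS => /set1gP/(canRL (mulgKV v)); rewrite mul1g.
have sTG : f @: 'C_G[x0 | 'P] \subset G.
  apply/subsetP=> _ /imsetP[s Ss ->]; have /rcosetP[k Kk ->] := f_rcoset s Ss.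
  by rewrite groupM ?(subsetP sSG s Ss) ?(subsetP sKG k Kk).
split=> //.
  apply/(intersecting_rcosetP sTG) => _ _ /imsetP[u Su ->] /imsetP[v Sv ->].
  by rewrite /= !rcoset_f // => /inj_rcosetS->.
rewrite card_in_imset // => u v Su Sv fuv.
by apply: inj_rcosetS; rewrite //= -(rcoset_f u) // -(rcoset_f v) // fuv.
Qed.

Lemma card_point_stab_strict_EKR : strict_EKR G -> #|'C_G[x0 | 'P]| = 2.
Proof.
have [defG ntK ntS _ _] := Frobenius_context frobK.
have [_ _ _ _ tiKS] := sdprod_context defG.
set S := 'C_G[x0 | 'P] in ntS tiKS *.
case=> _ strictG; apply/eqP; rewrite eqn_leq cardG_gt1 ntS andbT leqNgt.
apply/negP=> gt2S; have [h0 Sh0 nth0] := trivgPn _ ntS.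
have [k Kk ntk] := trivgPn _ ntK.
have [h1 Sh1] : exists2 h1, h1 \in S & h1 \notin [set 1; h0].
  apply/subsetPn; apply: contraTN gt2S => /subset_leq_card le_S.
  by rewrite -leqNgt (leq_trans le_S) // cards2; case: (_ != _).
rewrite !inE negb_or => /andP[nth1 neq_h1h0].
pose f s := if s == h0 then k * s else s.
have f_rcoset : {in S, forall s, f s \in K :* s}.
  by move=> s _; rewrite /f mem_rcoset; case: eqP; rewrite ?mulgK ?mulgV.
have [sTG iT cardT] := rcoset_transversal_intersecting f_rcoset.
have [x [g _ defT]] := strictG _ sTG iT (etrans cardT (esym (max_stab_sizeE x0))).
have mem_T s : s \in S -> s != h0 -> s \in f @: S.
  by move=> Ss neq_sh0; apply/imsetP; exists s; rewrite /f ?(negbTE neq_sh0).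
have Sxg : g \in 'C_G[x | 'P].
  move: (mem_T 1 (group1 _)); rewrite eq_sym nth0 defT mem_rcoset mul1g.
  by rewrite groupV => ->.
have defTx : f @: S = 'C_G[x | 'P] by rewrite defT /point_stab rcoset_id.
have xx0 : x = x0.
  have /point_stabP[Gh1 h1x] : h1 \in point_stab G x.
    by rewrite /point_stab -defTx mem_T.
  have /point_stabP[_ h1x0] := Sh1.
  exact: point_stab_fix_uniq Gh1 nth1 h1x h1x0.
have : k * h0 \in S.
  by rewrite /S -xx0 -defTx; apply/imsetP; exists h0; rewrite // /f eqxx.
rewrite groupMr // => Sk; have : k \in K :&: S by rewrite inE Kk.
by rewrite tiKS inE (negbTE ntk).
Qed.

End FrobeniusPermGroup.

Theorem theorem12 (n : nat) (G H : {group {perm 'I_n}}) :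
  frobenius_perm_group G -> frobenius_complement G H ->
  EKR G /\ (strict_EKR G <-> #|H| = 2).
Proof.
move=> frobG complH; have [_ _ [_ _ /andP[_ /existsP[x0 _]]]] := frobG.
have frobS : [Frobenius G with complement 'C_G[x0 | 'P]].
  exact/Frobenius_actionP/hasFrobeniusAction/point_stab_Frobenius_action.
have [K frobK] := Frobenius_kernel_exists frobS.
have [KH frobKH] := Frobenius_kernel_exists (frobenius_complement_Frobenius complH).
split; first exact: (Frobenius_perm_EKR frobG frobK).
split=> [strictG | oH].
  exact: Frobenius_compl_card2 frobKH frobK
    (card_point_stab_strict_EKR frobG frobK strictG).
exact: (strict_EKR_card_point_stab2 frobG frobK
  (Frobenius_compl_card2 frobK frobKH oH)).
Qed.
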